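(* Let $b>1$ be an integer and let $H$ be a generalized $b$-happy function with digit mean $\mu$ and digit standard deviation $\sigma$. Let $n$ be a positive integer with $4\mid n$ and let $C\subseteq\mathbb{Z}_{\ge 0}$. Given $\lambda>0$, let $$J_{n,\lambda}=\left[1+\tfrac34 n\mu+\lambda\sigma\sqrt{\tfrac34 n},\ \tfrac14 n+\tfrac34 n\mu-\lambda\sigma\sqrt{\tfrac34 n}\right].$$ Suppose there is a nonempty integer interval $I\subseteq J_{n,\lambda}$ with type-$C$ density $d$. Then there exists an $n$-strict interval $I_2$ whose type-$C$ density is at least $$\left(1-\frac{1}{\lambda^2}\right)\frac{d}{1+\frac{\sqrt{3n}\,\sigma\lambda}{|I|}}.$$
   Context: A generalized $b$-happy function: fix an integer $b>1$ and non-negative integers $h(0),\dots,h(b-1)$ with $h(0)=0$, $h(1)=1$; for $n=\sum_{i=0}^k a_ib^i$ in base $b$, $H(n)=\sum_{i=0}^k h(a_i)$. Digit mean $\mu=\frac1b\sum_{j=0}^{b-1}h(j)$, digit variance $\sigma^2=\frac1b\sum_{j=0}^{b-1}(h(j)-\mu)^2$. For $C\subseteq\mathbb{Z}_{\ge0}$, an integer $n$ is type-$C$ if $H^k(n)\in C$ for some integer $k\ge0$. An integer interval $[a,c]$ ($a,c$ real) is the set of integers $x$ with $a\le x\le c$; $|I|$ is its cardinality. The type-$C$ density of a finite nonempty integer interval $I$ is $|\{n\in I:n\text{ type-}C\}|/|I|$. An integer interval $I$ is $n$-strict if $I\subseteq[b^{n-1},b^n-1]$ and $|I|=b^{3n/4}$.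 *)

From HB Require Import structures.
From mathcomp Require Import all_boot all_order all_algebra.
From mathcomp Require Import boolp classical_sets reals.
Set Implicit Arguments. Unset Strict Implicit. Unset Printing Implicit Defensive.
Import Order.TTheory GRing.Theory Num.Theory.
Local Open Scope ring_scope.

(* Generalized b-happy function: H(n) = sum of h(a_i) over the base-b digits
   a_0, ..., a_k of n (k = trunc_log b n; for n = 0 this is h 0 = 0). *)
Definition happyH (b : nat) (h : nat -> nat) (n : nat) : nat :=
  (\sum_(i < (trunc_log b n).+1) h ((n %/ b ^ i) %% b))%N.

Definition digit_mean (R : realType) (b : nat) (h : nat -> nat) : R :=
  (\sum_(j < b) (h j)%:R) / b%:R.
Definition digit_var (R : realType) (b : nat) (h : nat -> nat) : R :=
  (\sum_(j < b) ((h j)%:R - digit_mean R b h) ^+ 2) / b%:R.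
Definition digit_sd (R : realType) (b : nat) (h : nat -> nat) : R :=
  Num.sqrt (digit_var R b h).

Definition typeC (b : nat) (h : nat -> nat) (C : set nat) (m : nat) : Prop :=
  exists k : nat, C (iter k (happyH b h) m).

(* The integer interval [lo, hi] (lo <= hi) of naturals; its cardinality *)
Definition icard (lo hi : nat) : nat := (hi.+1 - lo)%N.

Definition count_typeC (b : nat) (h : nat -> nat) (C : set nat) (lo hi : nat) : nat :=
  #|[set i : 'I_hi.+1 | (lo <= i)%N && `[< typeC b h C i >]]|.

Definition densityC (R : realType) (b : nat) (h : nat -> nat) (C : set nat)
  (lo hi : nat) : R :=
  (count_typeC b h C lo hi)%:R / (icard lo hi)%:R.

(* [lo, hi] is n-strict: contained in [b^(n-1), b^n - 1] with cardinality b^(3n/4)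
   (used with 4 | n, so 3n/4 = (3*n) %/ 4 exactly). *)
Definition n_strict (b n lo hi : nat) : Prop :=
  (lo <= hi)%N /\ (b ^ n.-1 <= lo)%N /\ (hi <= b ^ n - 1)%N /\
  icard lo hi = (b ^ ((3 * n) %/ 4))%N.

From HB Require Import structures.
From mathcomp Require Import all_boot all_order all_algebra.
From mathcomp Require Import boolp classical_sets reals.
From mathcomp Require Import ring lra zify.
Import Order.TTheory GRing.Theory Num.Theory.

Set Implicit Arguments.
Unset Strict Implicit.
Unset Printing Implicit Defensive.

(* Write n = 4q and L = 3q.  Prefixing an L-digit block y by a q-digit number T
   gives H(T b^L + y) = H(T) + D(y), where D is the h-sum over the L low digits;
   T = b^(q-1) + 11...1 realises every value H(T) = t in [1, q], and each block
   [T b^L, T b^L + b^L - 1] is n-strict.  Over y < b^L the digits of y are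
   independent and uniform, so D(y) has mean L mu and variance L sigma^2, and by
   Chebyshev at least (1 - 1/lam^2) b^L of the y are good:
   |D(y) - L mu| <= lam sigma sqrt L.  For good y the shifts t + D(y) with
   t in [lo - max D, hi - min D] cover [lo, hi], so double counting and
   averaging over t give a t whose block contains at least
   #good * #(type-C in I) / (|I| + 2 lam sigma sqrt L) type-C integers. *)

Definition digit_sum (b : nat) (h : nat -> nat) (k m : nat) : nat :=
  \sum_(i < k) h ((m %/ b ^ i) %% b).

Fixpoint repunit (b k : nat) : nat :=
  if k is k'.+1 then 1 + b * repunit b k' else 0.

(* The q-digit number [1 0 ... 0 1 ... 1] with t ones in all. *)
Definition happy_prefix (b q t : nat) : nat := b ^ q.-1 + repunit b t.-1.

Section Repunit.

Variable b : nat.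
Hypothesis b_gt1 : 1 < b.

Lemma repunit_lt k : repunit b k < b ^ k.
Proof. by elim: k => [|k IH] //=; rewrite expnS; nia. Qed.

Lemma repunit_lt_prefix q t : t <= q -> repunit b t.-1 < b ^ q.-1.
Proof.
by move=> le_tq; apply: leq_trans (repunit_lt _) _; rewrite leq_pexp2l //; lia.
Qed.

Lemma happy_prefix_bounds q t : 0 < t -> t <= q ->
  b ^ q.-1 <= happy_prefix b q t < b ^ q.
Proof.
move=> t_gt0 le_tq; rewrite /happy_prefix leq_addr /=.
have -> : b ^ q = b * b ^ q.-1 by rewrite -expnS; congr (_ ^ _); lia.
by have := repunit_lt_prefix le_tq; nia.
Qed.

End Repunit.

Section DigitSum.

Variables (b : nat) (h : nat -> nat).

Lemma digit_sum0 m : digit_sum b h 0 m = 0.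
Proof. by rewrite /digit_sum big_ord0. Qed.

Lemma digit_sumS k m : digit_sum b h k.+1 m = h (m %% b) + digit_sum b h k (m %/ b).
Proof.
rewrite /digit_sum big_ord_recl /= expn0 divn1; congr (_ + _).
by apply: eq_bigr => i _; rewrite /bump /= add1n expnS divnMA.
Qed.

Hypotheses (b_gt1 : 1 < b) (h0 : h 0 = 0).

Lemma digit_sum_0r k : digit_sum b h k 0 = 0.
Proof. by rewrite /digit_sum big1 // => i _; rewrite div0n mod0n. Qed.

Lemma digit_sum_cat k a x y : y < b ^ k ->
  digit_sum b h (k + a) (x * b ^ k + y) = digit_sum b h k y + digit_sum b h a x.
Proof.
elim: k y => [|k IH] y y_lt.
  by move: y_lt; rewrite expn0 ltnS leqn0 => /eqP->; rewrite digit_sum0 muln1 addn0.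
have b_gt0 : 0 < b by lia.
rewrite addSn !digit_sumS expnSr mulnA modnMDl divnMDl // IH ?addnA //.
by rewrite ltn_divLR // -expnSr.
Qed.

Lemma digit_sum_widen j k m : m < b ^ j -> j <= k ->
  digit_sum b h k m = digit_sum b h j m.
Proof.
move=> m_lt le_jk; rewrite -(subnKC le_jk).
by have := @digit_sum_cat j (k - j) 0 m m_lt; rewrite mul0n add0n digit_sum_0r addn0.
Qed.

Lemma happyH_digit_sum k m : m < b ^ k -> happyH b h m = digit_sum b h k m.
Proof.
move=> m_lt; have m_lt_log := trunc_log_ltn m b_gt1.
by case: (leqP k (trunc_log b m).+1) => [|/ltnW] le_k; [|symmetry];
  apply: digit_sum_widen.
Qed.

Lemma happyH_cat q L T y : T < b ^ q -> y < b ^ L ->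
  happyH b h (T * b ^ L + y) = digit_sum b h L y + digit_sum b h q T.
Proof.
move=> T_lt y_lt; rewrite (@happyH_digit_sum (L + q)) ?digit_sum_cat //.
by rewrite expnD; nia.
Qed.

Hypothesis h1 : h 1 = 1.

Lemma digit_sum_repunit j k : k <= j -> digit_sum b h j (repunit b k) = k.
Proof.
elim: k j => [|k IH] [|j] //= le_kj; rewrite ?digit_sum_0r //.
rewrite digit_sumS (addnC 1) mulnC modnMDl divnMDl; last by lia.
by rewrite modn_small // divn_small // addn0 h1 IH.
Qed.

Lemma digit_sum_happy_prefix q t : 0 < t -> t <= q ->
  digit_sum b h q (happy_prefix b q t) = t.
Proof.
move=> t_gt0 t_le_q; have := digit_sum_cat 1 1 (repunit_lt_prefix b_gt1 t_le_q).
rewrite mul1n (_ : q.-1 + 1 = q); last by lia.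
rewrite /happy_prefix => ->; rewrite digit_sumS digit_sum0 modn_small // h1.
by rewrite digit_sum_repunit; lia.
Qed.

End DigitSum.

Lemma n_strict_block b q T : 1 < b -> 0 < q -> b ^ q.-1 <= T < b ^ q ->
  n_strict b (q * 4) (T * b ^ (3 * q)) (T * b ^ (3 * q) + b ^ (3 * q) - 1).
Proof.
move=> b_gt1 q_gt0 /andP[T_ge T_lt].
have N_gt0 : 0 < b ^ (3 * q) by rewrite expn_gt0; lia.
have lo_n : b ^ (q * 4).-1 = b ^ q.-1 * b ^ (3 * q).
  by rewrite -expnD; congr (_ ^ _); lia.
have hi_n : b ^ (q * 4) = b ^ q * b ^ (3 * q) by rewrite -expnD; congr (_ ^ _); lia.
rewrite /n_strict /icard lo_n hi_n mulnA mulnK // leq_mul //.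
set N := b ^ (3 * q) in N_gt0 *.
by split; [lia | split=> //; split; [nia | lia]].
Qed.

Lemma typeC_happyH b h C m : typeC b h C (happyH b h m) -> typeC b h C m.
Proof. by move=> [k Ck]; exists k.+1; rewrite iterSr. Qed.

Lemma count_typeC_sum b h C lo hi : lo <= hi.+1 ->
  count_typeC b h C lo hi = \sum_(lo <= x < hi.+1) `[< typeC b h C x >].
Proof.
move=> le_lo_hi; rewrite /count_typeC -sum1_card big_mkcond /=.
rewrite (eq_bigr (fun i : 'I_hi.+1 => (lo <= i) && `[< typeC b h C i >] : nat));
  last by move=> i _; rewrite inE; case: ifP.
rewrite -(big_mkord xpredT (fun i => (lo <= i) && `[< typeC b h C i >] : nat)).
rewrite (big_cat_nat (leq0n lo) le_lo_hi) /= big_nat_cond big1 ?add0n.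
  by apply: eq_big_nat => i /andP[-> _].
by move=> i /andP[/andP[_ i_lt] _]; rewrite leqNgt i_lt.
Qed.

Lemma leq_sum_nat_subrange (F : nat -> nat) a c d e : a <= c -> c <= d -> d <= e ->
  \sum_(c <= i < d) F i <= \sum_(a <= i < e) F i.
Proof.
move=> le_ac le_cd le_de.
rewrite (big_cat_nat le_ac (leq_trans le_cd le_de)) (big_cat_nat le_cd le_de).
by rewrite /=; lia.
Qed.

Lemma exists_ge_average (f : nat -> nat) a c M : a < c ->
  M <= \sum_(a <= t < c) f t -> exists2 t, a <= t < c & M <= f t * (c - a).
Proof.
move=> lt_ac M_le; apply: contrapT => no_t.
have small t : a <= t < c -> f t * (c - a) < M.
  by move=> t_in; rewrite ltnNge; apply/negP => ?; apply: no_t; exists t.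
have M_gt0 : 0 < M by apply: leq_ltn_trans (small a _); rewrite ?leqnn ?lt_ac.
have : \sum_(a <= t < c) f t * (c - a) <= \sum_(a <= t < c) M.-1.
  rewrite big_nat_cond [leqRHS]big_nat_cond.
  by apply: leq_sum => t /andP[/small]; lia.
rewrite -big_distrl sum_nat_const_nat /=; nia.
Qed.

(* Double counting: as t runs over [lo - D1, hi - D2], each t + D y with y in G
   sweeps over all of [lo, hi]. *)
Lemma exists_shift_average N (P : pred nat) (D : 'I_N -> nat) (G : {set 'I_N})
    lo hi D1 D2 :
  (forall y, y \in G -> D2 <= D y <= D1) -> D2 <= D1 -> D1 <= lo -> lo <= hi ->
  exists2 t, lo - D1 <= t <= hi - D2 &
    #|G| * \sum_(lo <= x < hi.+1) P x
      <= (\sum_(y < N) P (t + D y)) * ((hi - D2).+1 - (lo - D1)).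
Proof.
move=> D_in le_D21 le_D1lo le_lohi.
pose f t := \sum_(y < N) P (t + D y).
suff [t t_in] : exists2 t, lo - D1 <= t < (hi - D2).+1 &
    #|G| * \sum_(lo <= x < hi.+1) P x <= f t * ((hi - D2).+1 - (lo - D1)).
  by exists t.
apply: exists_ge_average; first by lia.
rewrite /f -sum1_card big_distrl /= exchange_big /=.
apply: (@leq_trans (\sum_(y in G) \sum_(lo - D1 <= t < (hi - D2).+1) P (t + D y))).
  apply: leq_sum => y /D_in /andP[le_D2y le_yD1]; rewrite mul1n.
  have := @big_addn _ 0 addn (lo - D1) ((hi - D2).+1 + D y) (D y) xpredT P.
  rewrite addnK => <-.
  by apply: leq_sum_nat_subrange; lia.
by rewrite [leqRHS](bigID (mem G)) leq_addr.
Qed.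

Local Open Scope ring_scope.

Lemma big_nat_mul_split (V : nmodType) (F : nat -> V) M b :
  \sum_(0 <= y < M * b) F y = \sum_(0 <= x < M) \sum_(0 <= d < b) F (x * b + d)%N.
Proof.
elim: M => [|M IH]; first by rewrite mul0n !big_geq.
rewrite mulSnr (big_cat_nat (leq0n _) (leq_addr _ _)) IH big_nat_recr //=.
congr (_ + _); have := @big_addn _ 0 +%R 0 (M * b + b) (M * b) xpredT F.
by rewrite add0n addKn => ->; apply: eq_bigr => i _; rewrite addnC.
Qed.

Section DigitVariance.

Variables (R : realType) (b : nat) (h : nat -> nat).
Local Notation mu := (digit_mean R b h).
Local Notation var := (digit_var R b h).

Lemma digit_var_ge0 : 0 <= var.
Proof. by rewrite divr_ge0 // sumr_ge0 // => i _; apply: sqr_ge0. Qed.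

Hypothesis b_gt0 : (0 < b)%N.

Let b_neq0 : b%:R != 0 :> R. Proof. by rewrite pnatr_eq0 -lt0n. Qed.

Lemma sum_digit_dev : \sum_(j < b) ((h j)%:R - mu) = 0.
Proof.
by rewrite sumrB sumr_const card_ord -mulr_natr divfK // subrr.
Qed.

Lemma sum_digit_dev_sq : \sum_(j < b) ((h j)%:R - mu) ^+ 2 = b%:R * var.
Proof. by rewrite mulrC divfK. Qed.

(* Over a block of b^L consecutive integers the L low digits are independent
   and uniform, so the variances of the digits add up. *)
Lemma digit_sum_variance L :
  \sum_(0 <= y < b ^ L) ((digit_sum b h L y)%:R - L%:R * mu) ^+ 2
    = (b ^ L)%:R * (L%:R * var).
Proof.
elim: L => [|L IH].
  by rewrite expn0 big_nat1 digit_sum0 !mul0r subrr expr0n /= mulr0.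
pose e y := (digit_sum b h L y)%:R - L%:R * mu.
have block x : \sum_(0 <= d < b) ((digit_sum b h L.+1 (x * b + d))%:R - L.+1%:R * mu) ^+ 2
    = b%:R * var + b%:R * e x ^+ 2.
  rewrite big_mkord (eq_bigr (fun d : 'I_b =>
      ((h d)%:R - mu) ^+ 2 + e x ^+ 2 + (e x * ((h d)%:R - mu)) *+ 2)); last first.
    move=> d _; rewrite digit_sumS modnMDl divnMDl //.
    by rewrite modn_small // divn_small // addn0 natrD -addn1 natrD /e; ring.
  rewrite !big_split /= sum_digit_dev_sq sumr_const card_ord -mulr_sumr.
  by rewrite sum_digit_dev; ring.
rewrite expnSr big_nat_mul_split (eq_bigr _ (fun x _ => block x)) big_split /=.
rewrite sumr_const_nat subn0 -mulr_sumr /e IH -mulr_natr natrM.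
by rewrite -[L.+1]addn1 natrD; ring.
Qed.

End DigitVariance.

Lemma card_gt_markov (R : realFieldType) N (F : 'I_N -> R) w : 0 < w ->
  #|[set y | w < `|F y|]|%:R * w ^+ 2 <= \sum_y F y ^+ 2.
Proof.
move=> w_gt0; rewrite -sum1_card natr_sum mulr_suml.
rewrite [leRHS](bigID (mem [set y | w < `|F y|])) /=.
rewrite -[leLHS]addr0; apply: lerD; last by apply: sumr_ge0 => y _; apply: sqr_ge0.
apply: ler_sum => y; rewrite inE mul1r -[F y ^+ 2]real_normK ?num_real // => lt_wF.
by rewrite lerXn2r ?nnegrE ?normr_ge0 ?(ltW w_gt0) ?(ltW lt_wF).
Qed.

Lemma card_le_chebyshev (R : realFieldType) N (F : 'I_N -> R) s lam :
  0 <= s -> 0 < lam -> \sum_y F y ^+ 2 = N%:R * s ^+ 2 ->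
  N%:R * (1 - 1 / lam ^+ 2) <= #|[set y | `|F y| <= lam * s]|%:R.
Proof.
move=> s_ge0 lam_gt0 sumF.
set good := [set y | _]; have lam2_gt0 : 0 < lam ^+ 2 by rewrite exprn_gt0.
have card_good : #|good|%:R = N%:R - #|[set y | lam * s < `|F y|]|%:R :> R.
  have -> : [set y | lam * s < `|F y|] = ~: good.
    by apply/setP => y; rewrite !inE ltNge.
  by apply/eqP; rewrite eq_sym subr_eq -natrD cardsC card_ord.
case: (ltrP 0 s) => [s_gt0|s_le0].
  have := card_gt_markov F (mulr_gt0 lam_gt0 s_gt0); rewrite sumF => bad.
  rewrite card_good mulrBr mulr1 lerD2l lerN2 mulrA mulr1.
  by rewrite ler_pdivlMr // -(ler_pM2r (exprn_gt0 2 s_gt0)) -mulrA -exprMn.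
have s0 : s = 0 by apply/eqP; rewrite eq_le s_le0 s_ge0.
suff -> : good = [set: 'I_N].
  by rewrite cardsT card_ord ler_piMr ?ler0n // lerBlDr lerDl divr_ge0 ?ltW.
apply/setP => y; rewrite !inE s0 mulr0 normr_le0 -sqrf_eq0.
have sumF0 : \sum_y F y ^+ 2 = 0 by rewrite sumF s0 expr0n mulr0.
by rewrite (psumr_eq0P (fun z _ => sqr_ge0 (F z)) sumF0) ?eqxx.
Qed.

Lemma exists_nat_bounds (R : realDomainType) (T : finType) (G : {set T})
    (D : T -> nat) (u v : R) y0 :
  y0 \in G -> (forall y, y \in G -> u <= (D y)%:R <= v) ->
  exists D1 D2, [/\ forall y, y \in G -> (D2 <= D y <= D1)%N, (D2 <= D1)%N,
                    D1%:R <= v & u <= D2%:R].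
Proof.
move=> Gy0 D_in.
case: (arg_maxnP D Gy0) => y1 Gy1 max_y1; case: (arg_minnP D Gy0) => y2 Gy2 min_y2.
exists (D y1), (D y2); split.
- by move=> y Gy; rewrite min_y2 //=; apply: max_y1.
- exact: leq_trans (min_y2 _ Gy0) (max_y1 _ Gy0).
- by case/andP: (D_in _ Gy1).
- by case/andP: (D_in _ Gy2).
Qed.

Lemma density_ratio_le (R : realFieldType) (a c Ic e N ng K ct : R) :
  0 < a -> 0 < Ic -> 0 <= e -> 0 < N -> 0 <= c -> 0 <= ct ->
  K <= Ic + e -> N * a <= ng -> ng * c <= ct * K ->
  a * (c / Ic / (1 + e / Ic)) <= ct / N.
Proof.
move=> a_gt0 Ic_gt0 e_ge0 N_gt0 c_ge0 ct_ge0 le_K le_ng le_ct.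
have -> : c / Ic / (1 + e / Ic) = c / (Ic + e).
  by field; rewrite !gt_eqF //; lra.
rewrite mulrA ler_pdivrMr; last by lra.
rewrite mulrAC ler_pdivlMr //; nra.
Qed.

Section StrictBlocks.

Variables (R : realType) (b : nat) (h : nat -> nat) (C : set nat).
Hypotheses (b_gt1 : (1 < b)%N) (h0 : h 0%N = 0%N) (h1 : h 1%N = 1%N).

Local Notation L q := (3 * q)%N.
Local Notation mu := (digit_mean R b h).
Local Notation sd := (digit_sd R b h).
Local Notation typeCb x := `[< typeC b h C x >].

Lemma exists_strict_block q t : (0 < t <= q)%N ->
  exists lo2 hi2, n_strict b (q * 4) lo2 hi2 /\
    (\sum_(y < b ^ L q) typeCb (t + digit_sum b h (L q) y))%N%:R / (b ^ L q)%:R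
      <= densityC R b h C lo2 hi2.
Proof.
case/andP=> t_gt0 t_le_q; set N := (b ^ L q)%N; set T := happy_prefix b q t.
have N_gt0 : (0 < N)%N by rewrite expn_gt0; lia.
have T_in := happy_prefix_bounds b_gt1 t_gt0 t_le_q.
exists (T * N)%N, (T * N + N - 1)%N; split; first by apply: n_strict_block; lia.
rewrite /densityC /icard (_ : (T * N + N - 1).+1 - T * N = N)%N; last by lia.
rewrite ler_pM2r ?invr_gt0 ?ltr0n // ler_nat count_typeC_sum; last by lia.
rewrite (_ : (T * N + N - 1).+1 = N + T * N)%N; last by lia.
rewrite -{1}[(T * N)%N]add0n big_addn addnK big_mkord; apply: leq_sum => y _.
case: asboolP => //= C_t; rewrite asboolT //; apply: typeC_happyH.
rewrite addnC (happyH_cat b_gt1 h0 (q := q)) ?(ltn_ord y) //; last by case/andP: T_in.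
by rewrite digit_sum_happy_prefix // addnC.
Qed.

Lemma exists_dense_shift q lo hi (lam : R) :
  (0 < q)%N -> 0 < lam -> 0 < 1 - 1 / lam ^+ 2 -> (lo <= hi)%N ->
  1 + (L q)%:R * mu + lam * sd * Num.sqrt (L q)%:R <= lo%:R ->
  hi%:R <= q%:R + (L q)%:R * mu - lam * sd * Num.sqrt (L q)%:R ->
  exists2 t, (0 < t <= q)%N &
    (1 - 1 / lam ^+ 2) * (densityC R b h C lo hi /
      (1 + 2 * (lam * sd * Num.sqrt (L q)%:R) / (icard lo hi)%:R))
    <= (\sum_(y < b ^ L q) typeCb (t + digit_sum b h (L q) y))%N%:R / (b ^ L q)%:R.
Proof.
move=> q_gt0 lam_gt0 a_gt0 le_lohi lo_ge hi_le.
set N := (b ^ L q)%N; set D := fun y : 'I_N => digit_sum b h (L q) y.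
set w := lam * sd * Num.sqrt (L q)%:R in lo_ge hi_le *.
have N_gt0 : 0 < N%:R :> R by rewrite ltr0n expn_gt0; lia.
have sd_ge0 : 0 <= sd := sqrtr_ge0 _.
have w_ge0 : 0 <= w by rewrite !mulr_ge0 ?sqrtr_ge0 ?ltW.
pose G := [set y : 'I_N | `|(D y)%:R - (L q)%:R * mu| <= lam * (sd * Num.sqrt (L q)%:R)].
have card_G : N%:R * (1 - 1 / lam ^+ 2) <= #|G|%:R.
  apply: card_le_chebyshev => //; first by rewrite mulr_ge0 ?sqrtr_ge0.
  rewrite exprMn /digit_sd !sqr_sqrtr ?ler0n ?digit_var_ge0 //.
  by rewrite (mulrC (digit_var R b h)) -digit_sum_variance ?big_mkord //; lia.
have [y0 Gy0] : exists y0, y0 \in G.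
  apply/set0Pn; rewrite -card_gt0 -(ltr_nat R).
  exact: lt_le_trans (mulr_gt0 N_gt0 a_gt0) card_G.
have D_in y : y \in G -> (L q)%:R * mu - w <= (D y)%:R <= (L q)%:R * mu + w.
  by rewrite inE /w -mulrA ler_norml => /andP[? ?]; apply/andP; split; lra.
have [D1 [D2 [D_bd le_D21 D1_le D2_ge]]] := exists_nat_bounds Gy0 D_in.
have lt_D1lo : (D1 < lo)%N by rewrite -(ltr_nat R); lra.
have le_hiq : (hi <= q + D2)%N by rewrite -(ler_nat R) natrD; lra.
have [t t_in le_count] :=
  exists_shift_average (fun x => typeCb x) D_bd le_D21 (ltnW lt_D1lo) le_lohi.
exists t; first by lia.
set K := ((hi - D2).+1 - (lo - D1))%N in le_count.
have K_eq : (K + D2 = icard lo hi + D1)%N by rewrite /K /icard; lia.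
rewrite /densityC count_typeC_sum; last by lia.
apply: (density_ratio_le (K := K%:R) (ng := #|G|%:R)) => //.
- by rewrite ltr0n /icard; lia.
- by rewrite mulr_ge0.
- by have := congr1 (fun n => n%:R : R) K_eq; rewrite /= !natrD; lra.
- by rewrite -!natrM ler_nat.
Qed.

End StrictBlocks.

Theorem theorem3p3 (R : realType) (b : nat) (h : nat -> nat) (C : set nat)
  (n : nat) (lam : R) (lo hi : nat) :
  (1 < b)%N -> h 0%N = 0%N -> h 1%N = 1%N ->
  (0 < n)%N -> (4 %| n)%N -> 0 < lam ->
  (lo <= hi)%N ->
  1 + 3 / 4 * n%:R * digit_mean R b h
    + lam * digit_sd R b h * Num.sqrt (3 / 4 * n%:R) <= lo%:R ->
  hi%:R <= n%:R / 4 + 3 / 4 * n%:R * digit_mean R b h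
    - lam * digit_sd R b h * Num.sqrt (3 / 4 * n%:R) ->
  exists lo2 hi2 : nat, n_strict b n lo2 hi2 /\
    (1 - 1 / lam ^+ 2) *
      (densityC R b h C lo hi /
        (1 + Num.sqrt (3 * n%:R) * digit_sd R b h * lam / (icard lo hi)%:R))
    <= densityC R b h C lo2 hi2.
Proof.
move=> b_gt1 h0 h1 n_gt0 /dvdnP[q n_eq] lam_gt0 le_lohi lo_ge hi_le; subst n.
have q_gt0 : (0 < q)%N by lia.
have eL : 3 / 4 * (q * 4)%:R = (3 * q)%:R :> R by rewrite !natrM; field.
have e4 : (q * 4)%:R / 4 = q%:R :> R by rewrite natrM; field.
have e_sqrt : Num.sqrt (3 * (q * 4)%:R) * digit_sd R b h * lam
    = 2 * (lam * digit_sd R b h * Num.sqrt (3 * q)%:R).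
  rewrite (_ : 3 * (q * 4)%:R = 2 ^+ 2 * (3 * q)%:R); last by rewrite !natrM; ring.
  by rewrite sqrtrM ?sqr_ge0 // sqrtr_sqr ger0_norm //; ring.
rewrite eL in lo_ge hi_le; rewrite e4 in hi_le; rewrite e_sqrt.
case: (ltrP 0 (1 - 1 / lam ^+ 2)) => [a_gt0 | a_le0].
  have [t t_in dense] :=
    exists_dense_shift C b_gt1 h0 h1 q_gt0 lam_gt0 a_gt0 le_lohi lo_ge hi_le.
  have [lo2 [hi2 [strict block]]] := exists_strict_block R C b_gt1 h0 h1 t_in.
  by exists lo2, hi2; split => //; apply: le_trans dense block.
have [lo2 [hi2 [strict _]]] := exists_strict_block R C b_gt1 h0 h1 (t := 1) q_gt0.
exists lo2, hi2; split => //; apply: le_trans (divr_ge0 (ler0n _ _) (ler0n _ _)).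
rewrite mulr_le0_ge0 // divr_ge0 ?divr_ge0 ?ler0n // addr_ge0 // divr_ge0 ?ler0n //.
by rewrite !mulr_ge0 ?sqrtr_ge0 ?ler0n ?ltW.
Qed.
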